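(* Let $G=(V,E)$ be a finite connected undirected graph, let $k$ be a positive integer, and fix a DFS order on $V$. Consider the lexicographic order $\preceq$ on $\mathcal{C}(G;k)$ induced by this vertex order. Let $X\in\mathcal{C}(G;k)$ be an element that is not the $\preceq$-smallest element of $\mathcal{C}(G;k)$. Then there exists $X'\in\mathcal{N}(X)$ with $X'\prec X$.
   Context: $\mathcal{C}(G;k)$ denotes the family of all vertex sets $X\subseteq V$ with $|X|=k$ such that the induced subgraph $G[X]$ is connected. For $X\in\mathcal{C}(G;k)$, the neighborhood of $X$ is $\mathcal{N}(X)=\{X'\in\mathcal{C}(G;k): |X\cap X'|=k-1\}$. A DFS order on $V$ is the linear order of the vertices by their discovery time in a depth-first search of $G$, started from some vertex, and vertices are compared using $<$ with respect to this order. For distinct $k$-sets $A,B\subseteq V$, write $A\prec B$ if the smallest vertex of the symmetric difference $A\triangle B$ lies in $A$. Equivalently, the increasing sequence of elements of $A$ is lexicographically smaller than that of $B$. Write $A\preceq B$ if $A\prec B$ or $A=B$. *)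

From mathcomp Require Import all_boot.
Set Implicit Arguments. Unset Strict Implicit. Unset Printing Implicit Defensive.

Definition simple_graph (T : finType) (e : rel T) : Prop :=
  symmetric e /\ irreflexive e.

Definition graph_connected (T : finType) (e : rel T) : Prop :=
  forall x y : T, connect e x y.

(* Operational depth-first search started at r.
   dfs_state e r vis st : after some steps, vis is the list of discovered
   vertices in discovery order and st is the current stack (top first). *)
Inductive dfs_state (T : finType) (e : rel T) (r : T) : seq T -> seq T -> Prop :=
  | dfs_start : dfs_state e r [:: r] [:: r]
  | dfs_push vis x st y :
      dfs_state e r vis (x :: st) -> e x y -> y \notin vis ->
      dfs_state e r (rcons vis y) (y :: x :: st)
  | dfs_pop vis x st :
      dfs_state e r vis (x :: st) -> (forall y, e x y -> y \in vis) ->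
      dfs_state e r vis st.

Definition is_dfs_order (T : finType) (e : rel T) (ord : seq T) : Prop :=
  exists r : T, dfs_state e r ord [::].

Definition vle (T : finType) (ord : seq T) (x y : T) : bool := index x ord <= index y ord.

Definition induced_connected (T : finType) (e : rel T) (X : {set T}) : bool :=
  [forall x in X, forall y in X, connect [rel a b | [&& e a b, a \in X & b \in X]] x y].

Definition conn_ksets (T : finType) (e : rel T) (k : nat) (X : {set T}) : bool :=
  (#|X| == k) && induced_connected e X.

Definition in_nbhd (T : finType) (e : rel T) (k : nat) (X X' : {set T}) : bool :=
  conn_ksets e k X' && (#|X :&: X'| == k.-1).

Definition lex_lt (T : finType) (ord : seq T) (A B : {set T}) : bool :=
  (A != B) &&
  [exists x in A :\: B, forall y in (A :\: B) :|: (B :\: A), vle ord x y].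

From mathcomp Require Import all_boot.

(* Let y be the first vertex outside X in the DFS order. Every vertex of a DFS
   order but the root has an earlier neighbour, its DFS parent, so every prefix
   of the order induces a connected subgraph. If y is not the root, the prefix P
   ending at y lies in X + y, which is connected through the parent of y. Some
   vertex z of the connected set X + y outside P can be removed without
   disconnecting it; z is a vertex of X after y, so X + y - z is a neighbour of
   X preceding it. Such a z exists because X, not being minimal, has a vertex
   after y. *)

Set Implicit Arguments.
Unset Strict Implicit.
Unset Printing Implicit Defensive.

Section InducedSubgraphs.
Variables (T : finType) (e : rel T).

Definition induced (A : {set T}) : rel T := [rel a b | [&& e a b, a \in A & b \in A]].

Definition connected_in (A : {set T}) : Prop :=
  {in A &, forall x y, connect (induced A) x y}.

Lemma induced_connectedP A : reflect (connected_in A) (induced_connected e A).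
Proof.
apply: (iffP forall_inP) => [H x y xA yA | H x xA].
  exact: (forall_inP (H x xA)).
by apply/forall_inP => y yA; apply: H.
Qed.

Lemma connect_induced_sub (A B : {set T}) x y :
  A \subset B -> connect (induced A) x y -> connect (induced B) x y.
Proof.
move=> /subsetP AB; apply: connect_sub => {}x {}y /and3P[exy xA yA].
by apply: connect1; rewrite /induced /= exy !AB.
Qed.

Lemma connected_in_set1 y : connected_in [set y].
Proof. by move=> u v /set1P-> /set1P->. Qed.

Lemma exit_edge (W A : {set T}) t0 w0 :
  t0 \in A -> w0 \notin A -> connect (induced W) t0 w0 ->
  exists t, exists2 w, (t \in A) && (w \notin A) & (w \in W) && e t w.
Proof.
move=> tA wA /connectP[p pp w0E]; rewrite {w0}w0E in wA.
elim: p t0 tA pp wA => [|a p IH] t tA /=; first by move=> _ /negP.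
case/andP=> /and3P[eta _ aW] pp lastA.
case aA: (a \in A); first exact: IH aA pp lastA.
by exists t, a; rewrite ?tA ?aA ?aW.
Qed.

Hypothesis e_sym : symmetric e.

Lemma induced_sym A : symmetric (induced A).
Proof. by move=> x y; rewrite /induced /= e_sym; case: (x \in A); case: (y \in A). Qed.

Lemma connected_in_setU1 (A : {set T}) t w :
  connected_in A -> t \in A -> e t w -> connected_in (w |: A).
Proof.
move=> cA tA etw.
have to_t x : x \in w |: A -> connect (induced (w |: A)) x t.
  case/setU1P=> [->|xA].
    by apply: connect1; rewrite /induced /= e_sym etw setU11 setU1r.
  by apply: connect_induced_sub (cA x t xA tA); apply: subsetUr.
move=> x y xW yW; apply: connect_trans (to_t x xW) _.
by rewrite (sym_connect_sym (@induced_sym _)); apply: to_t.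
Qed.

(* Grow the connected set T0 inside W one neighbour at a time; the vertex
   added last can be removed from W without disconnecting it. *)
Lemma removable_vertex (W T0 : {set T}) :
  connected_in W -> connected_in T0 -> T0 \subset W -> T0 != set0 ->
  W :\: T0 != set0 -> exists2 z, z \in W :\: T0 & connected_in (W :\ z).
Proof.
move=> cW; have [n] := ubnP #|W :\: T0|; elim: n T0 => // n IH T0.
rewrite ltnS => cardW c0 sub0 /set0Pn[t0 t0T] /set0Pn[w0 /setDP[w0W w0T]].
have [t [w /andP[tT wT] /andP[wW etw]]] :=
  @exit_edge W T0 t0 w0 t0T w0T (cW t0 w0 (subsetP sub0 t0 t0T) w0W).
have c1 : connected_in (w |: T0) by apply: connected_in_setU1 c0 tT etw.
have wWT : w \in W :\: T0 by rewrite inE wT wW.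
have WD1 : W :\: (w |: T0) = (W :\: T0) :\ w by rewrite setDDl setUC.
have [Wempty|Wne] := eqVneq (W :\: (w |: T0)) set0.
  exists w => //; suff -> : W :\ w = T0 by [].
  apply/setP=> v; rewrite !inE; case vT: (v \in T0).
    by rewrite (subsetP sub0 v vT) andbT; apply: contraNneq wT => <-.
  apply/negbTE/negP => /andP[vw vW].
  by move/setP/(_ v): Wempty; rewrite !inE negb_or vw vT vW.
have sub1 : w |: T0 \subset W by apply/subsetP=> v /setU1P[->//|/(subsetP sub0)].
have card1 : #|W :\: (w |: T0)| < n.
  by apply: leq_trans cardW; apply: proper_card; rewrite WD1 properD1.
have ne1 : w |: T0 != set0 by apply/set0Pn; exists w; apply: setU11.
have [z] := IH _ card1 c1 sub1 ne1 Wne.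
by rewrite WD1 => /setD1P[_ zWT]; exists z.
Qed.

End InducedSubgraphs.

Section DepthFirstSearch.
Variables (T : finType) (e : rel T).

Lemma index_rcons_mem (s : seq T) (y v : T) :
  v \in s -> index v (rcons s y) = index v s.
Proof. by move=> vs; rewrite -cats1 index_cat vs. Qed.

Lemma dfs_state_inv r vis st : dfs_state e r vis st ->
  [/\ r \in vis, {subset st <= vis},
      {in vis, forall v, 0 < index v vis ->
         exists2 u, e u v & index u vis < index v vis} &
      {in vis, forall v, v \notin st -> forall w, e v w -> w \in vis}].
Proof.
elim=> {vis st} [|vis x st y _ [rv stv par clo] exy yv|vis x st _ [rv stv par clo] hx].
- by split=> [||v|v]; rewrite ?mem_seq1 // => /eqP->; rewrite /= ?mem_seq1 eqxx.
- have xv : x \in vis by apply: stv; rewrite inE eqxx.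
  split=> [|v|v|v]; rewrite ?mem_rcons ?inE.
  + by rewrite rv orbT.
  + by case/predU1P=> [->|/stv->]; rewrite ?eqxx ?orbT.
  + case/predU1P=> [->|vv] pos.
      exists x => //; rewrite index_rcons_mem // -cats1 index_cat (negbTE yv).
      by rewrite /= eqxx addn0 index_mem.
    rewrite index_rcons_mem // in pos *; have [u euv ui] := par v vv pos.
    have uv : u \in vis by rewrite -index_mem (ltn_trans ui) // index_mem.
    by exists u; rewrite ?index_rcons_mem.
  + case/predU1P=> [->|vv]; first by rewrite eqxx.
    rewrite negb_or => /andP[_ nst] w evw.
    by rewrite mem_rcons inE (clo v vv nst w evw) orbT.
- split=> // [v vs|v vv nst w evw]; first by apply: stv; rewrite inE vs orbT.
  have [vxE|vx] := eqVneq v x; first by apply: hx; rewrite -vxE.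
  by apply: (clo v vv) => //; rewrite inE negb_or vx.
Qed.

Variable ord : seq T.
Hypothesis dfs : is_dfs_order e ord.

Lemma dfs_order_mem v : graph_connected e -> v \in ord.
Proof.
case: dfs => r /dfs_state_inv[rv _ _ clo] /(_ r v)/connectP[p].
elim: p r rv => [|a p IH] x xv /=; first by move=> _ ->.
by case/andP=> exa; apply: IH; apply: (clo x xv _ a exa).
Qed.

Lemma dfs_order_parent v : v \in ord -> 0 < index v ord ->
  exists2 u, e u v & index u ord < index v ord.
Proof. by case: dfs => r /dfs_state_inv[_ _ par _]; apply: par. Qed.

End DepthFirstSearch.

Section Exchange.
Variables (T : finType) (e : rel T) (ord : seq T) (k : nat) (X : {set T}).

Lemma lex_lt_witness (Y : {set T}) : #|Y| = #|X| -> lex_lt ord Y X ->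
  exists a b, [/\ a \notin X, b \in X & index a ord <= index b ord].
Proof.
move=> cardYX /andP[YX /exists_inP[a /setDP[aY aX] a_min]].
have [b bX bY] : exists2 b, b \in X & b \notin Y.
  apply/subsetPn; apply: contra YX => XY.
  by rewrite eq_sym eqEcard XY cardYX leqnn.
by exists a, b; split=> //; apply: (forall_inP a_min); rewrite !inE bX bY orbT.
Qed.

Lemma lex_lt_swap y z : y \notin X -> z \in X -> index y ord < index z ord ->
  lex_lt ord ((y |: X) :\ z) X.
Proof.
move=> yX zX yz; have zy : z != y by apply: contraNneq yX => <-.
apply/andP; split.
  by apply: contraNneq yX => <-; rewrite !inE eqxx eq_sym zy.
apply/exists_inP; exists y; first by rewrite !inE eqxx eq_sym zy yX.
apply/forall_inP => w; rewrite !inE /vle.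
have [->|wy] := eqVneq w y; first by rewrite leqnn.
have [->|wz] := eqVneq w z; first by rewrite ltnW.
by case: (w \in X).
Qed.

Lemma in_nbhd_swap y z : #|X| = k -> y \notin X -> z \in X ->
  connected_in e ((y |: X) :\ z) -> in_nbhd e k X ((y |: X) :\ z).
Proof.
move=> cardX yX zX /induced_connectedP cXyz.
have zy : z != y by apply: contraNneq yX => <-.
have XI : X :&: ((y |: X) :\ z) = X :\ z.
  by apply/setP=> v; rewrite !inE; case: (v \in X); rewrite ?andbF ?orbT.
rewrite /in_nbhd /conn_ksets cXyz XI andbT -cardX.
have zXy : z \in y |: X by rewrite setU1r.
have := cardsD1 z (y |: X); rewrite zXy cardsU1 yX !add1n => -[<-].
by have := cardsD1 z X; rewrite zX add1n => ->; rewrite !eqxx.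
Qed.

Hypothesis e_sym : symmetric e.

Lemma exchange_smaller (T0 : {set T}) y :
  #|X| = k -> y \notin X -> connected_in e (y |: X) ->
  connected_in e T0 -> y \in T0 -> T0 \subset y |: X -> X :\: T0 != set0 ->
  {in X :\: T0, forall v, index y ord < index v ord} ->
  exists X', in_nbhd e k X X' && lex_lt ord X' X.
Proof.
move=> cardX yX cXy cT0 yT0 sub0 /set0Pn[x /setDP[xX xT0]] late.
have T0ne : T0 != set0 by apply/set0Pn; exists y.
have XyT0ne : (y |: X) :\: T0 != set0.
  by apply/set0Pn; exists x; rewrite inE xT0 setU1r.
have [z /setDP[zXy zT0] cXyz] := removable_vertex e_sym cXy cT0 sub0 T0ne XyT0ne.
have zX : z \in X by case/setU1P: zXy => // zy; rewrite zy yT0 in zT0.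
exists ((y |: X) :\ z); rewrite in_nbhd_swap // lex_lt_swap //.
by apply: late; rewrite inE zT0.
Qed.

End Exchange.

Section ParentOrders.
Variables (T : finType) (e : rel T) (ord : seq T).
Hypothesis e_sym : symmetric e.
Hypothesis ord_mem : forall v, v \in ord.
Hypothesis ord_parent : forall v, 0 < index v ord ->
  exists2 u, e u v & index u ord < index v ord.

Lemma index_ord_inj : injective (index^~ ord).
Proof. by move=> u v E; rewrite -(nth_index u (ord_mem u)) /= E nth_index. Qed.

Lemma prefix_connected n : connected_in e [set v | index v ord <= n].
Proof.
set P := [set v | _]; move=> x y xP yP.
pose r := nth x ord 0.
suff from_r v : v \in P -> connect (induced e P) r v.
  apply: connect_trans (from_r y yP).
  by rewrite (sym_connect_sym (induced_sym e_sym P)); apply: from_r.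
have [m] := ubnP (index v ord); elim: m v => // m IH v; rewrite ltnS => vm vP.
have [v0|vpos] := posnP (index v ord); first by rewrite /r -v0 nth_index.
have [u euv uv] := ord_parent vpos.
have uP : u \in P by move: (vP); rewrite !inE; apply: leq_trans (ltnW uv).
apply: connect_trans (IH u (leq_trans uv vm) uP) _.
by apply: connect1; rewrite /induced /= euv uP vP.
Qed.

Variables (k : nat) (X : {set T}).
Hypothesis cardX : #|X| = k.
Hypothesis cX : connected_in e X.

Lemma exists_smaller_neighbour_prefix y0 b :
  y0 \notin X -> 0 < index y0 ord ->
  (forall v, v \notin X -> index y0 ord <= index v ord) ->
  b \in X -> index y0 ord < index b ord ->
  exists X', in_nbhd e k X X' && lex_lt ord X' X.
Proof.
move=> y0X y0_pos y0_min bX y0b.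
have [p epy0 py0] := ord_parent y0_pos.
have pX : p \in X by apply/negPn/negP => /y0_min; rewrite leqNgt py0.
apply: (exchange_smaller e_sym
          (T0 := [set v | index v ord <= index y0 ord]) cardX y0X).
- exact: connected_in_setU1 cX pX epy0.
- exact: prefix_connected.
- by rewrite inE.
- apply/subsetP=> v; rewrite inE leq_eqVlt => /predU1P[/index_ord_inj->|vy0].
    exact: setU11.
  by apply/setU1r/negPn/negP => /y0_min; rewrite leqNgt vy0.
- by apply/set0Pn; exists b; rewrite !inE bX andbT -ltnNge.
- by move=> v; rewrite !inE -ltnNge => /andP[].
Qed.

(* When the root is outside X, the parent of the first vertex of X plays the
   role of the first vertex outside X. *)
Lemma exists_smaller_neighbour_root r b :
  r \notin X -> index r ord = 0 -> b \in X ->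
  exists X', in_nbhd e k X X' && lex_lt ord X' X.
Proof.
move=> rX r_root bX.
case: (arg_minnP (P := [pred v | v \in X]) (index^~ ord) bX) => x0 /= x0X x0_min.
have [y eyx0 yx0] : exists2 y, e y x0 & index y ord < index x0 ord.
  apply: ord_parent; rewrite lt0n; apply: contraNneq rX => x0_root.
  by rewrite (index_ord_inj (etrans r_root (esym x0_root))).
have yX : y \notin X by apply/negP => /x0_min; rewrite leqNgt yx0.
have ex0y : e x0 y by rewrite e_sym.
apply: (exchange_smaller e_sym (T0 := [set y]) cardX yX).
- exact: connected_in_setU1 cX x0X ex0y.
- exact: connected_in_set1.
- by rewrite set11.
- by rewrite sub1set setU11.
- by apply/set0Pn; exists x0; rewrite !inE x0X andbT; apply: contraNneq yX => <-.
- by move=> v /setD1P[_ vX]; apply: leq_trans yx0 (x0_min v vX).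
Qed.

End ParentOrders.

Theorem lemma2 (T : finType) (e : rel T) (ord : seq T) (k : nat) (X : {set T}) :
  simple_graph e -> graph_connected e -> 0 < k ->
  is_dfs_order e ord ->
  conn_ksets e k X ->
  (exists Y : {set T}, conn_ksets e k Y && lex_lt ord Y X) ->
  exists X' : {set T}, in_nbhd e k X X' && lex_lt ord X' X.
Proof.
move=> [e_sym _] e_conn _ dfs /andP[/eqP cardX /induced_connectedP cX].
case=> Y /andP[/andP[/eqP cardY _] YX].
have ord_mem v : v \in ord := dfs_order_mem dfs v e_conn.
have parent v := dfs_order_parent dfs (ord_mem v).
have [a [b [aX bX ab]]] := lex_lt_witness (etrans cardY (esym cardX)) YX.
case: (arg_minnP (P := [pred v | v \notin X]) (index^~ ord) aX) => y0 /= y0X y0_min.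
have [y0_root|y0_pos] := posnP (index y0 ord).
  exact: (exists_smaller_neighbour_root e_sym ord_mem parent cardX cX
            y0X y0_root bX).
apply: (exists_smaller_neighbour_prefix e_sym ord_mem parent cardX cX
          y0X y0_pos y0_min bX).
rewrite ltn_neqAle (leq_trans (y0_min a aX) ab) andbT.
by apply: contraNneq y0X => /(index_ord_inj ord_mem) ->.
Qed.
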